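(* Let $n\ge2$ and $W_n=(w_{ij},\ 1\le j<i\le n)$ with $w_{ij}>0$. Then for $1\le j\le n-1$, $$\tau^n_j(T^\triangle_n(W_n))=\prod_{\ell=1}^{j-1}w_{j\ell}\prod_{k=j+1}^nw_{kj}.$$
   Context: Triangular arrays are $X=(x_{ij},\ 1\le j<i\le n)$ of positive reals. Their type is $\tau^n_j(X)=D_{nj}(X)/D_{n,j-1}(X)$ where $D_{n0}(X)=1$ and $D_{nj}(X)=x_{nj}x_{n-1,j-1}\cdots x_{n-j+1,1}$ for $1\le j\le n-1$. Local maps: for $i\ge3$, $l_{i1}$ replaces $x_{i1}$ by $x_{i-1,1}x_{i1}$; for $2\le j$ with $j+1<i$, $l_{ij}$ replaces $(x_{i-1,j-1},x_{i-1,j},x_{i,j-1},x_{ij})=(a,b,c,d)$ by $(bc/(ab+ac),b,c,d(b+c))$, other entries unchanged. For $1\le j\le n-2$, $\rho^{\triangle,n}_j=l_{n-j+1,1}\circ l_{n-j+2,2}\circ\cdots\circ l_{n-1,j-1}\circ l_{nj}$. $r^\triangle_{n,n-1}$ replaces $x_{n,n-1}$ by $1/x_{n,n-1}$. With conventions $x_{i0}=1$, $x_{n+1,n-1}=1$: for $k=0,\dots,\lfloor n/2\rfloor-1$, $b^{\triangle,n}_{n-2k,n-2k-1}$ replaces $x_{n-2k,n-2k-1}$ by $x_{n-2k+1,n-2k-1}x_{n-2k,n-2k-2}/x_{n-2k,n-2k-1}$; for $k=1,\dots,\lfloor(n-1)/2\rfloor$, $b^{\triangle,n}_{n-2k+1,n-2k}$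 is the identity. $\rho^{\triangle,n}_{n-1}=b^{\triangle,n}_{2,1}\circ\cdots\circ b^{\triangle,n}_{n,n-1}\circ r^\triangle_{n,n-1}$, $R^\triangle_n=\rho^{\triangle,n}_{n-1}\circ\cdots\circ\rho^{\triangle,n}_1$. $T^\triangle_2(x_{21})=x_{21}$ and for $n\ge3$, $T^\triangle_n(X_n)=R^\triangle_n$ applied to the array whose first $n-1$ rows are $T^\triangle_{n-1}(x_{ij},\ 1\le j<i\le n-1)$ and whose last row is $(x_{n1},\dots,x_{n,n-1})$. *)

(* Triangular arrays X = (x_ij, 1 <= j < i <= n) are encoded
   as functions nat -> nat -> R; only entries with 1 <= j < i <= n matter. *)
From mathcomp Require Import all_boot all_order all_algebra.
Set Implicit Arguments. Unset Strict Implicit. Unset Printing Implicit Defensive.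
Import Order.TTheory GRing.Theory Num.Theory.
Local Open Scope ring_scope.

Section Tri.
Variable R : realFieldType.

Definition tarray := nat -> nat -> R.

Definition upd (X : tarray) (i j : nat) (v : R) : tarray :=
  fun a b => if (a == i) && (b == j) then v else X a b.

Definition Dnj (n j : nat) (X : tarray) : R :=
  \prod_(m < j) X (n - m)%N (j - m)%N.

Definition tau (n j : nat) (X : tarray) : R := Dnj n j X / Dnj n j.-1 X.

Definition lmap (i j : nat) (X : tarray) : tarray :=
  if j == 1%N then upd X i 1 (X i.-1 1%N * X i 1%N)
  else
    let a := X i.-1 j.-1 in let b := X i.-1 j in
    let c := X i j.-1 in let d := X i j in
    upd (upd X i.-1 j.-1 (b * c / (a * b + a * c))) i j (d * (b + c)).

Fixpoint rho_rec (i j : nat) (X : tarray) : tarray :=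
  match j with
  | 0 => X
  | j'.+1 => rho_rec i.-1 j' (lmap i j X)
  end.

Definition rho (n j : nat) (X : tarray) : tarray := rho_rec n j X.

Definition rmap (n : nat) (X : tarray) : tarray :=
  upd X n n.-1 (X n n.-1)^-1.

Definition getc (n : nat) (X : tarray) (i j : nat) : R :=
  if j == 0%N then 1
  else if (i == n.+1) && (j == n.-1) then 1 else X i j.

Definition bmap (n i : nat) (X : tarray) : tarray :=
  if odd (n - i) then X
  else upd X i i.-1 (getc n X i.+1 i.-1 * getc n X i (i - 2) / X i i.-1).

(* rho^{triangle,n}_{n-1} = b_{2,1} o ... o b_{n,n-1} o r_{n,n-1} *)
Definition rho_last (n : nat) (X : tarray) : tarray :=
  foldl (fun Y i => bmap n i Y) (rmap n X) (rev (iota 2 n.-1)).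

Definition Rmap (n : nat) (X : tarray) : tarray :=
  rho_last n (foldl (fun Y j => rho n j Y) X (iota 1 (n - 2))).

Fixpoint Tmap (n : nat) (W : tarray) : tarray :=
  match n with
  | 0 | 1 | 2 => W
  | n'.+1 =>
      let P := Tmap n' W in
      Rmap n (fun i j => if (i < n)%N then P i j else W i j)
  end.

End Tri.

(* Each local map l_{ij} only changes entries on the antidiagonal i - j, and
   rho_{ij} = l_{i-j+1,1} o ... o l_{ij} satisfies
     D_{ij}(rho_{ij} Y) D_{ij}(Y) = y_{ij}^2 D_{i-1,j}(Y) D_{i,j-1}(Y).
   Hence rho_1, ..., rho_{n-2} give D_{nj}(R_n X) = x_{n1}...x_{nj} D_{n-1,j}(X)
   for j <= n-2, i.e. tau^n_j(R_n X) = x_{nj} tau^{n-1}_j(X).  The last map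
   rho_{n-1} only changes the diagonal x_{r,r-1}: it gives
   tau^n_{n-1}(R_n X) = x_{n,n-1} * (x_{n-1,n-2} / x_{n-2,n-3} * ...), and the
   alternating product of its new diagonal is x_{n1}...x_{n,n-1}.  Induction on
   n, carrying this alternating product and positivity along, gives the
   formula. *)

From mathcomp Require Import all_boot all_order all_algebra.
From mathcomp Require Import ring zify.
Set Implicit Arguments. Unset Strict Implicit. Unset Printing Implicit Defensive.
Import Order.TTheory GRing.Theory Num.Theory.
Local Open Scope ring_scope.

Section TriangularArrays.
Variable R : realFieldType.
Implicit Types (X Y Z W : tarray R) (g : nat -> R).

Definition pos_array N X :=
  forall a b, (0 < b)%N -> (b < a)%N -> (a <= N)%N -> 0 < X a b.

Lemma pos_array_le M N X : (M <= N)%N -> pos_array N X -> pos_array M X.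
Proof. by move=> MN HX a b b0 ba aM; apply: HX => //; apply: leq_trans MN. Qed.

Definition diag X : nat -> R := fun r => X r r.-1.

Lemma prodr_nat_gt0 (F : nat -> R) m k :
  (forall r, (m <= r < k)%N -> 0 < F r) -> 0 < \prod_(m <= r < k) F r.
Proof. by move=> HF; rewrite big_nat_cond; apply: prodr_gt0 => r /andP[/HF]. Qed.

Lemma Dnj0 n X : Dnj n 0 X = 1.
Proof. by rewrite /Dnj big_ord0. Qed.

Lemma DnjS n j X : Dnj n j.+1 X = X n j.+1 * Dnj n.-1 j X.
Proof.
rewrite /Dnj big_ord_recl /= !subn0; congr (_ * _).
by apply: eq_bigr => m _; rewrite /bump /=; congr (X _ _); lia.
Qed.

Lemma eq_Dnj n j X Y : (j <= n)%N ->
  (forall b, (0 < b <= j)%N -> X (b + (n - j))%N b = Y (b + (n - j))%N b) ->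
  Dnj n j X = Dnj n j Y.
Proof.
move=> jn XY; apply: eq_bigr => [[m /= mj]] _.
have -> : (n - m = (j - m) + (n - j))%N by lia.
by apply: XY; lia.
Qed.

Lemma Dnj_gt0 N n j X : pos_array N X -> (j < n)%N -> (n <= N)%N -> 0 < Dnj n j X.
Proof. by move=> HX jn nN; apply: prodr_gt0 => [[m /= mj]] _; apply: HX; lia. Qed.

Lemma Dnj_diag a X : Dnj a.+1 a X = \prod_(2 <= r < a.+2) diag X r.
Proof.
elim: a => [|a IH]; first by rewrite Dnj0 big_geq.
by rewrite DnjS /= IH [RHS]big_nat_recr //= mulrC.
Qed.

Lemma Dnj_subdiag a X : Dnj a.+2 a X = \prod_(3 <= r < a.+3) X r (r - 2)%N.
Proof.
elim: a => [|a IH]; first by rewrite Dnj0 big_geq.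
rewrite DnjS /= IH [RHS]big_nat_recr //= mulrC.
by have -> : (a.+3 - 2 = a.+1)%N by lia.
Qed.

Lemma lmap_id i k Y a b : (0 < k)%N -> ~ (a = i /\ b = k) ->
  ~ ((1 < k)%N /\ a = i.-1 /\ b = k.-1) -> lmap i k Y a b = Y a b.
Proof.
move=> k0 Nik Nik'; rewrite /lmap /upd; case: ifP => [/eqP k1|/negbT k1].
  by case: (a =P i) => [ai|//]; case: (b =P 1%N) => [b1|//]; exfalso; apply: Nik; subst.
case: (a =P i) => [ai|_]; case: (b =P k) => [bk|_] //=; first by exfalso; apply: Nik.
all: case: (a =P i.-1) => [ai'|//]; case: (b =P k.-1) => [bk'|//].
all: by exfalso; apply: Nik'; lia.
Qed.

Lemma rho_rec_id i j Y a b : (j <= i)%N ->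
  ~ ((0 < b <= j)%N /\ a = (b + (i - j))%N) -> rho_rec i j Y a b = Y a b.
Proof.
elim: j i Y => [//|j IH] i Y ji Nab /=.
by rewrite IH; [apply: lmap_id => //; lia | lia | lia].
Qed.

Lemma Dnj_lmap_id n j i k Y : (0 < k)%N -> (j <= n)%N ->
  (n - j <> i - k)%N \/ (j < k.-1)%N -> Dnj n j (lmap i k Y) = Dnj n j Y.
Proof.
move=> k0 jn Hnj; apply: eq_Dnj => // b /andP[b0 bj].
by apply: lmap_id => //; lia.
Qed.

Lemma pos_lmap N i k Y : pos_array N Y -> (0 < k)%N -> (k.+1 < i)%N -> (i <= N)%N ->
  pos_array N (lmap i k Y).
Proof.
move=> HY k0 ki iN a b b0 ba aN; rewrite /lmap /upd; case: ifP => [_|/negbT k1].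
  by case: ifP => _; [apply: mulr_gt0; apply: HY; lia | exact: HY].
have pa : 0 < Y i.-1 k.-1 by apply: HY; lia.
have pb : 0 < Y i.-1 k by apply: HY; lia.
have pc : 0 < Y i k.-1 by apply: HY; lia.
have pd : 0 < Y i k by apply: HY; lia.
case: ifP => _; first by rewrite mulr_gt0 ?addr_gt0.
case: ifP => _; last exact: HY.
by rewrite divr_gt0 ?mulr_gt0 ?addr_gt0 ?mulr_gt0.
Qed.

Lemma pos_rho_rec N i j Y : pos_array N Y -> (j.+1 < i)%N -> (i <= N)%N ->
  pos_array N (rho_rec i j Y).
Proof.
elim: j i Y => [//|j IH] i Y HY ji iN /=.
by apply: IH; [apply: pos_lmap | lia | lia].
Qed.

Lemma Dnj_rho_rec N i j Y : pos_array N Y -> (0 < j)%N -> (j.+1 < i)%N -> (i <= N)%N ->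
  Dnj i j (rho_rec i j Y) * Dnj i j Y = Y i j ^+ 2 * Dnj i.-1 j Y * Dnj i j.-1 Y.
Proof.
elim: j i Y => [//|j IH] i Y HY _ ji iN.
case: j IH ji => [|j] IH ji.
  by rewrite /= !DnjS !Dnj0 /lmap /upd /= !eqxx /=; ring.
(* l_{i,j+2} changes only a = x_{i-1,j+1} into a' and d = x_{i,j+2} into
   d (b + c); the induction hypothesis for L then closes by a a' (b + c) = b c. *)
set L := lmap i j.+2 Y.
have IHL := IH i.-1 L (pos_lmap (k := j.+2) HY isT ji iN) isT ltac:(lia) ltac:(lia).
set a := Y i.-1 j.+1; set b := Y i.-1 j.+2; set c := Y i j.+1; set d := Y i j.+2.
set A := Dnj i.-1.-1 j Y; set B := Dnj i.-1.-1 j.+1 Y; set C := Dnj i.-1 j Y.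
have La : L i.-1 j.+1 = b * c / (a * b + a * c).
  by rewrite /L /lmap /upd /= !eqxx /=; case: (i.-1 =P i) => [?|//]; lia.
have Ld : rho_rec i.-1 j.+1 L i j.+2 = d * (b + c).
  by rewrite rho_rec_id; [rewrite /L /lmap /upd /= !eqxx | lia | lia].
have -> : rho_rec i j.+2 Y = rho_rec i.-1 j.+1 L by [].
rewrite [Dnj i j.+2 _]DnjS Ld.
rewrite [Dnj i.-1 j.+1 L]DnjS La !Dnj_lmap_id -/A -/B -/C in IHL; try lia.
set P := Dnj i.-1 j.+1 _ in IHL *.
rewrite [Dnj i j.+2 Y]DnjS [Dnj i.-1 j.+1 Y]DnjS [Dnj i.-1 j.+2 Y]DnjS [Dnj i j.+1 Y]DnjS.
rewrite -/a -/b -/c -/d -/A -/B -/C.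
have entry_gt0 u v : (0 < v < u)%N -> (u <= N)%N -> 0 < Y u v.
  by move=> /andP[v0 vu] uN; apply: HY.
have a_gt0 : 0 < a by apply: entry_gt0; lia.
have b_gt0 : 0 < b by apply: entry_gt0; lia.
have c_gt0 : 0 < c by apply: entry_gt0; lia.
have A_gt0 : 0 < A by apply: (Dnj_gt0 HY); lia.
have abc_gt0 : 0 < a * b + a * c by rewrite addr_gt0 ?mulr_gt0.
have -> : P = b * c / (a * b + a * c) * B * C / A.
  apply: (mulIf (x := b * c / (a * b + a * c) * A)).
    by rewrite gt_eqF // !mulr_gt0 ?invr_gt0.
  by rewrite IHL; field; rewrite !gt_eqF.
by field; rewrite !gt_eqF.
Qed.

Definition rho_upto n k X := foldl (fun Y j => rho n j Y) X (iota 1 k).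

Lemma rho_uptoS n k X : rho_upto n k.+1 X = rho n k.+1 (rho_upto n k X).
Proof. by rewrite /rho_upto -[X in iota _ X]addn1 iotaD foldl_cat add1n. Qed.

Lemma rho_upto_id n k X a b : (k <= n)%N -> (a - b < n - k)%N ->
  rho_upto n k X a b = X a b.
Proof.
elim: k => [//|k IH] kn ab.
by rewrite rho_uptoS /rho rho_rec_id ?IH //; lia.
Qed.

Lemma Dnj_rho_upto_id n k i j X : (k <= n)%N -> (j <= i)%N -> (i - j < n - k)%N ->
  Dnj i j (rho_upto n k X) = Dnj i j X.
Proof. by move=> kn ji Hij; apply: eq_Dnj => // b bj; apply: rho_upto_id; lia. Qed.

Lemma pos_rho_upto n k X : pos_array n X -> (k.+2 <= n)%N -> pos_array n (rho_upto n k X).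
Proof.
move=> HX; elim: k => [//|k IH] kn.
by rewrite rho_uptoS; apply: pos_rho_rec; [apply: IH; lia | lia | ].
Qed.

Lemma Dnj_rho_upto n k j X : pos_array n X -> (k.+2 <= n)%N -> (j <= k)%N ->
  Dnj n j (rho_upto n k X) = (\prod_(1 <= l < j.+1) X n l) * Dnj n.-1 j X.
Proof.
move=> HX; elim: k j => [|k IH] j kn jk.
  by move: jk; rewrite leqn0 => /eqP->; rewrite !Dnj0 big_geq ?mulr1.
set Z := rho_upto n k X.
rewrite rho_uptoS /rho -/Z; case: (ltnP j k.+1) => [jk'|kj].
  rewrite -IH; [|lia|lia]; apply: eq_Dnj => [|b bj]; [lia | apply: rho_rec_id; lia].
have -> : j = k.+1 by lia.
have HZ : pos_array n Z by apply: pos_rho_upto => //; lia.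
have := Dnj_rho_rec (j := k.+1) HZ isT kn (leqnn n).
rewrite [Dnj n k.+1.-1 Z]IH 1?[Z n k.+1]rho_upto_id; try lia.
rewrite [Dnj n k.+1 Z]Dnj_rho_upto_id 1?[Dnj n.-1 k.+1 Z]Dnj_rho_upto_id; try lia.
rewrite [Dnj n k.+1 X]DnjS [\prod_(1 <= l < k.+2) _]big_nat_recr //=.
have x_gt0 : 0 < X n k.+1 by apply: HX; lia.
have D_gt0 : 0 < Dnj n.-1 k X by apply: (Dnj_gt0 HX); lia.
move=> Hrho; apply: (mulIf (x := X n k.+1 * Dnj n.-1 k X)); first by rewrite gt_eqF ?mulr_gt0.
by rewrite Hrho; ring.
Qed.

Definition bval n Y i :=
  if odd (n - i) then Y i i.-1
  else getc n Y i.+1 i.-1 * getc n Y i (i - 2) / Y i i.-1.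

Lemma bmapE n i Y a b :
  bmap n i Y a b = if (a == i) && (b == i.-1) then bval n Y i else Y a b.
Proof.
rewrite /bmap /bval /upd; case: ifP => _ //.
by case: (a =P i) => [->|//]; case: (b =P i.-1) => [->|].
Qed.

(* Each b_{i,i-1} rewrites x_{i,i-1} from entries off the diagonal, so the
   maps commute and all read the array they are applied to. *)
Lemma foldl_bmap n s Y a b : uniq s -> all (leq 2) s ->
  foldl (fun Y i => bmap n i Y) Y s a b =
  if (a \in s) && (b == a.-1) then bval n Y a else Y a b.
Proof.
elim: s Y => [//|i s IH] Y /= /andP[i_s s_uniq] /andP[i2 s2].
rewrite IH // bmapE in_cons.
case: (a =P i) => [->|ai] /=; first by rewrite (negbTE i_s).
case: (boolP (a \in s)) => [a_s|] //=; case: (b =P a.-1) => // _.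
have a2 : (2 <= a)%N by move/allP: s2 => /(_ a a_s).
have Nai : (a.+1 == i) && (a.-1 == i.-1) = false.
  by apply/negbTE/andP => -[/eqP ? /eqP]; lia.
by rewrite /bval /getc !bmapE (introF eqP ai) Nai.
Qed.

Lemma rho_lastE n Z a b : (2 <= n)%N ->
  rho_last n Z a b =
  if [&& (2 <= a)%N, (a <= n)%N & b == a.-1] then bval n (rmap n Z) a else rmap n Z a b.
Proof.
move=> n2; rewrite /rho_last foldl_bmap ?rev_uniq ?iota_uniq ?all_rev //; last first.
  by apply/allP => x; rewrite mem_iota => /andP[].
rewrite mem_rev mem_iota.
have -> : (2 + n.-1 = n.+1)%N by lia.
by rewrite ltnS andbA.
Qed.

Lemma getc_gt0 n Y i j : pos_array n Y ->
  (j == 0%N) || ((i == n.+1) && (j == n.-1)) || [&& (0 < j)%N, (j < i)%N & (i <= n)%N] ->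
  0 < getc n Y i j.
Proof.
move=> HY Hij; rewrite /getc; case: ifP => // j0; case: ifP => // Hn.
by move: Hij; rewrite j0 Hn /= => /and3P[j0' ji iN]; apply: HY.
Qed.

Lemma pos_rmap n Z : pos_array n Z -> pos_array n (rmap n Z).
Proof.
move=> HZ a b b0 ba an; rewrite /rmap /upd; case: ifP => _; last exact: HZ.
by rewrite invr_gt0; apply: HZ; lia.
Qed.

Lemma bval_gt0 n Y a : pos_array n Y -> (2 <= a <= n)%N -> 0 < bval n Y a.
Proof.
move=> HY /andP[a2 an]; have Ya : 0 < Y a a.-1 by apply: HY; lia.
rewrite /bval; case: ifP => _ //.
rewrite divr_gt0 ?mulr_gt0 //; apply: getc_gt0 => //.
  case: (a =P n) => [->|na]; first by rewrite !eqxx orbT.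
  by apply/orP; right; apply/and3P; split; lia.
case: (a =P 2%N) => [->|na] //.
by apply/orP; right; apply/and3P; split; lia.
Qed.

Lemma pos_rho_last n Z : (2 <= n)%N -> pos_array n Z -> pos_array n (rho_last n Z).
Proof.
move=> n2 HZ a b b0 ba an; rewrite rho_lastE //.
case: ifP => [/and3P[a2 _ _]|_]; last exact: pos_rmap.
by apply: bval_gt0; [apply: pos_rmap | lia].
Qed.

Lemma pos_Rmap n X : (3 <= n)%N -> pos_array n X -> pos_array n (Rmap n X).
Proof.
by move=> n3 HX; apply: pos_rho_last; [lia | apply: pos_rho_upto => //; lia].
Qed.

Lemma Dnj_Rmap n j X : (3 <= n)%N -> pos_array n X -> (j <= n - 2)%N ->
  Dnj n j (Rmap n X) = (\prod_(1 <= l < j.+1) X n l) * Dnj n.-1 j X.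
Proof.
move=> n3 HX jn; rewrite -(Dnj_rho_upto (k := (n - 2)%N) HX) //; last lia.
apply: eq_Dnj => [|b /andP[b0 bj]]; first lia.
rewrite /Rmap rho_lastE; last lia.
case: ifP => [/and3P[_ _ /eqP]|_]; first lia.
by rewrite /rmap /upd; case: ifP => // /andP[/eqP ? /eqP ?]; lia.
Qed.

Lemma tau_Rmap n j X : (3 <= n)%N -> pos_array n X -> (0 < j <= n - 2)%N ->
  tau n j (Rmap n X) = X n j * tau n.-1 j X.
Proof.
move=> n3 HX /andP[j0 jn]; rewrite /tau !Dnj_Rmap //; last lia.
case: j j0 jn => [//|j] _ jn /=.
rewrite big_nat_recr //=.
have P_gt0 : 0 < \prod_(1 <= l < j.+1) X n l by apply: prodr_nat_gt0 => l Hl; apply: HX; lia.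
have D_gt0 : 0 < Dnj n.-1 j X by apply: (Dnj_gt0 HX); lia.
by field; rewrite !gt_eqF.
Qed.

Definition altprod g m :=
  \prod_(2 <= r < m.+1) (if odd (m - r) then (g r)^-1 else g r).

Lemma altprodS g m : (0 < m)%N -> altprod g m.+1 = (altprod g m)^-1 * g m.+1.
Proof.
move=> m0; rewrite /altprod big_nat_recr //= subnn /= -prodfV.
congr (_ * _); apply: eq_big_nat => r /andP[_ rm].
by rewrite subSn // /=; case: odd; rewrite ?invrK.
Qed.

Lemma altprodSS g m : (0 < m)%N -> altprod g m.+2 = altprod g m / g m.+1 * g m.+2.
Proof. by move=> m0; rewrite !altprodS // invfM invrK. Qed.

(* [f] is the diagonal after the maps b_{i,i-1}, [y] the diagonal before them
   and [z] the entries just below it. *)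
Lemma prod_altprod_flip (f y z : nat -> R) m : z 2%N = 1 ->
  (forall a, (2 <= a <= m)%N ->
     f a = if odd (m - a) then y a else z a.+1 * z a / y a) ->
  \prod_(2 <= a < m.+1) f a = \prod_(3 <= a < m.+2) z a / altprod y m /\
  altprod f m = \prod_(3 <= a < m.+2) z a / \prod_(2 <= a < m.+1) y a.
Proof.
move=> z2; elim/ltn_ind: m => -[|[|[|m]]] IH Hf.
- by rewrite /altprod !big_geq // invr1 mulr1.
- by rewrite /altprod !big_geq // invr1 mulr1.
- by rewrite /altprod !big_nat1 /= Hf //= z2 mulr1.
have [IHf IHalt] : \prod_(2 <= a < m.+2) f a = \prod_(3 <= a < m.+3) z a / altprod y m.+1 /\
    altprod f m.+1 = \prod_(3 <= a < m.+3) z a / \prod_(2 <= a < m.+2) y a.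
  apply: IH => // a /andP[a2 am]; rewrite Hf; last by apply/andP; split; lia.
  have -> : (m.+3 - a = (m.+1 - a).+2)%N by lia.
  by rewrite /= negbK.
have fm2 : f m.+2 = y m.+2.
  by rewrite Hf; [have -> : (m.+3 - m.+2 = 1)%N by lia | lia].
have fm3 : f m.+3 = z m.+4 * z m.+3 / y m.+3 by rewrite Hf ?subnn //; lia.
have prod_recr2 (F : nat -> R) k l : (k <= l)%N ->
    \prod_(k <= a < l.+2) F a = \prod_(k <= a < l) F a * F l * F l.+1.
  by move=> kl; rewrite (big_nat_recr l.+1) ?(big_nat_recr l) // ltnW.
rewrite !altprodSS // IHalt (prod_recr2 f 2 m.+2) // (prod_recr2 y 2 m.+2) //.
rewrite (prod_recr2 z 3 m.+3) // IHf fm2 fm3.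
by split; rewrite !invfM ?invrK; ring.
Qed.

Section LastStep.
Variables (m : nat) (X : tarray R).
Hypothesis HX : pos_array m.+3 X.
Local Notation n := m.+3.
Local Notation Y := (rmap n (rho_upto n m.+1 X)).

(* The conventions of [getc] make [subdiag 2] and [subdiag n.+1] equal to 1. *)
Let subdiag a := getc n Y a (a - 2).

Lemma diag_rmap a : (0 < a < n)%N -> diag Y a = diag X a.
Proof.
move=> /andP[a0 an]; rewrite /diag /rmap /upd.
case: ifP => [/andP[/eqP ? _]|_]; first lia.
by apply: rho_upto_id; lia.
Qed.

Lemma diag_rmap_last : diag Y n = (X n m.+2)^-1.
Proof. by rewrite /diag /rmap /upd !eqxx /= rho_upto_id //; lia. Qed.

Lemma diag_Rmap a : (2 <= a <= n)%N ->
  diag (Rmap n X) a = if odd (n - a) then diag Y a else subdiag a.+1 * subdiag a / diag Y a.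
Proof.
move=> /andP[a2 an]; rewrite /diag /Rmap rho_lastE // a2 an eqxx /= /bval.
by rewrite /subdiag subSS subn1.
Qed.

Lemma prod_subdiag :
  \prod_(3 <= a < n.+2) subdiag a = \prod_(1 <= l < m.+2) X n l * Dnj m.+2 m.+1 X.
Proof.
have subdiag_last : subdiag n.+1 = 1 by rewrite /subdiag /getc !eqxx.
rewrite big_nat_recr //= subdiag_last mulr1 -(Dnj_rho_upto (k := m.+1) HX) //.
rewrite Dnj_subdiag; apply: eq_big_nat => a /andP[a3 an].
rewrite /subdiag /getc; case: ifP => [/eqP|_]; first lia.
case: ifP => [/andP[/eqP ? _]|_]; first lia.
by rewrite /rmap /upd; case: ifP => // /andP[_ /eqP]; lia.
Qed.

Lemma Dnj_Rmap_subdiag : Dnj n m.+1 (Rmap n X) = \prod_(3 <= a < n.+2) subdiag a.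
Proof. by rewrite prod_subdiag Dnj_Rmap. Qed.

Lemma altprod_diag_rmap : altprod (diag Y) n = (X n m.+2 * altprod (diag X) m.+2)^-1.
Proof.
rewrite altprodS // diag_rmap_last -invfM mulrC; congr (_ * _)^-1.
by apply: eq_big_nat => a /andP[a2 an]; rewrite diag_rmap //; lia.
Qed.

Lemma prod_diag_rmap :
  \prod_(2 <= a < n.+1) diag Y a = Dnj m.+2 m.+1 X / X n m.+2.
Proof.
rewrite big_nat_recr //= diag_rmap_last Dnj_diag; congr (_ * _).
by apply: eq_big_nat => a /andP[a2 an]; rewrite diag_rmap //; lia.
Qed.

Lemma tau_Rmap_last : tau n m.+2 (Rmap n X) = X n m.+2 * altprod (diag X) m.+2.
Proof.
have [prod_diag _] := prod_altprod_flip (erefl : subdiag 2 = 1) diag_Rmap.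
rewrite /tau Dnj_diag prod_diag Dnj_Rmap_subdiag altprod_diag_rmap invrK.
have subdiag_gt0 : 0 < \prod_(3 <= a < n.+2) subdiag a.
  rewrite prod_subdiag mulr_gt0 ?(Dnj_gt0 HX) //.
  by apply: prodr_nat_gt0 => l Hl; apply: HX; lia.
by field; rewrite gt_eqF.
Qed.

Lemma altprod_diag_Rmap : altprod (diag (Rmap n X)) n = \prod_(1 <= l < n) X n l.
Proof.
have [_ ->] := prod_altprod_flip (erefl : subdiag 2 = 1) diag_Rmap.
rewrite prod_subdiag prod_diag_rmap [RHS]big_nat_recr //=.
have x_gt0 : 0 < X n m.+2 by apply: HX.
have D_gt0 : 0 < Dnj m.+2 m.+1 X by apply: (Dnj_gt0 HX).
by field; rewrite !gt_eqF.
Qed.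

End LastStep.

Lemma eq_tau_rows n j X Y : (forall a b, (a <= n)%N -> X a b = Y a b) ->
  tau n j X = tau n j Y.
Proof.
move=> XY; rewrite /tau /Dnj.
by congr (_ / _); apply: eq_bigr => i _; apply: XY; apply: leq_subr.
Qed.

Lemma Tmap_spec m W : pos_array m.+2 W ->
  [/\ pos_array m.+2 (Tmap m.+2 W),
      altprod (diag (Tmap m.+2 W)) m.+2 = \prod_(1 <= l < m.+2) W m.+2 l &
      forall j, (0 < j < m.+2)%N ->
        tau m.+2 j (Tmap m.+2 W) =
          (\prod_(1 <= l < j) W j l) * (\prod_(j.+1 <= k < m.+3) W k j)].
Proof.
elim: m => [|m IH] HW.
  split=> // [|j /andP[j0 j2]]; first by rewrite /altprod !big_nat1.
  have -> : j = 1%N by lia.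
  by rewrite /tau /= DnjS !Dnj0 big_geq // !big_nat1 mul1r !mulr1 divr1.
have [posT altT tauT] := IH (pos_array_le (leqnSn _) HW).
set T := Tmap m.+2 W.
set X := fun i j => if (i < m.+3)%N then T i j else W i j.
have -> : Tmap m.+3 W = Rmap m.+3 X by [].
have XT a b : (a <= m.+2)%N -> X a b = T a b by move=> am; rewrite /X ltnS am.
have XW b : X m.+3 b = W m.+3 b by rewrite /X ltnn.
have HX : pos_array m.+3 X.
  move=> a b b0 ba; rewrite leq_eqVlt => /orP[/eqP am|am].
    by rewrite am XW; apply: HW; lia.
  by rewrite XT //; apply: posT.
split=> [||j /andP[j0]]; first exact: pos_Rmap.
  by rewrite altprod_diag_Rmap //; apply: eq_bigr => l _.
rewrite ltnS leq_eqVlt => /orP[/eqP->|jm].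
  rewrite tau_Rmap_last // XW.
  have -> : altprod (diag X) m.+2 = altprod (diag T) m.+2.
    by apply: eq_big_nat => a /andP[_ am]; rewrite /diag XT.
  by rewrite altT big_nat1 mulrC.
rewrite tau_Rmap //; last by apply/andP; split; lia.
rewrite XW (eq_tau_rows _ XT) tauT; last by apply/andP.
by rewrite [in RHS]big_nat_recr //=; [ring | lia].
Qed.

End TriangularArrays.

Theorem proposition6p5 (R : realFieldType) (n : nat) (W : tarray R) :
  (2 <= n)%N ->
  (forall i j : nat, (1 <= j)%N -> (j < i)%N -> (i <= n)%N -> 0 < W i j) ->
  forall j : nat, (1 <= j)%N -> (j <= n.-1)%N ->
    tau n j (Tmap n W) =
      (\prod_(1 <= l < j) W j l) * (\prod_(j.+1 <= k < n.+1) W k j).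
Proof.
case: n => [|[|m]] // _ HW j j1 jn.
have [_ _ tauT] := Tmap_spec HW.
by apply: tauT; rewrite j1.
Qed.
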